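(* Let $(X,\sigma)$ be a one-sided or two-sided subshift over a finite alphabet which has a forward Li-Yorke pair $x,y$. Then there exists $f\in E(X,\mathbb{Z}^+)$ such that $f(x)\neq f(y)$ but $f(x)$ and $f(y)$ are forward asymptotic. In particular, $f$ is not injective on its image and therefore $f$ is not a completely regular element of $X^X$.
   Context: For a finite alphabet $\mathcal A$, a one-sided (resp. two-sided) subshift is a closed subset $X\subset\mathcal A^{\mathbb{Z}^+}$ (resp. $\mathcal A^{\mathbb{Z}}$), product topology, invariant under the left shift $\sigma(x)_n=x_{n+1}$, with $\sigma$ restricted to $X$. $E(X,\mathbb{Z}^+)$ is the closure of $\{\sigma^n:n\ge0\}$ in $X^X$ (pointwise convergence topology, composition). Fix a compatible metric $d$. A pair is forward asymptotic if $\lim_{n\to+\infty}d(\sigma^nx,\sigma^ny)=0$, forward proximal if $\inf_{n\ge0}d(\sigma^nx,\sigma^ny)=0$, and a forward Li-Yorke pair if forward proximal but not forward asymptotic. An element $f$ of a semigroup is completely regular if there exists $g$ in it with $f=fgf$ and $fg=gf$. *)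

From mathcomp Require Import all_boot all_order all_algebra.
From Stdlib Require List.
Set Implicit Arguments. Unset Strict Implicit. Unset Printing Implicit Defensive.
Import Order.TTheory GRing.Theory Num.Theory.

Inductive sided := OneSided | TwoSided.

Definition idx (s : sided) : Type :=
  match s with OneSided => nat | TwoSided => int end.

Definition succ_idx (s : sided) : idx s -> idx s :=
  match s return idx s -> idx s with
  | OneSided => fun k : nat => k.+1
  | TwoSided => fun k : int => (k + 1)%R
  end.

Definition in_win (s : sided) (N : nat) : idx s -> bool :=
  match s return idx s -> bool with
  | OneSided => fun k : nat => (k <= N)%N
  | TwoSided => fun k : int => (`|k| <= N%:Z)%R
  end.

Definition pt (s : sided) (A : finType) := idx s -> A.

Definition shift (s : sided) (A : finType) (x : pt s A) : pt s A :=
  fun k => x (@succ_idx s k).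

(* x and y agree on the window of radius N (basic cylinder neighbourhood) *)
Definition agree (s : sided) (A : finType) (N : nat) (x y : pt s A) : Prop :=
  forall k : idx s, @in_win s N k -> x k = y k.

(* X is closed in the product topology (A discrete) *)
Definition closed_set (s : sided) (A : finType) (X : pt s A -> Prop) : Prop :=
  forall x : pt s A, (forall N : nat, exists y, X y /\ agree N x y) -> X x.

Definition subshift (s : sided) (A : finType) (X : pt s A -> Prop) : Prop :=
  closed_set X /\ (forall x, X x -> X (shift x)).

(* forward asymptotic: d(sigma^n x, sigma^n y) -> 0 *)
Definition fwd_asymptotic (s : sided) (A : finType) (x y : pt s A) : Prop :=
  forall N : nat, exists M : nat, forall n : nat, (M <= n)%N ->
    agree N (iter n (@shift s A) x) (iter n (@shift s A) y).

(* forward proximal: inf_{n >= 0} d(sigma^n x, sigma^n y) = 0 *)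
Definition fwd_proximal (s : sided) (A : finType) (x y : pt s A) : Prop :=
  forall N : nat, exists n : nat,
    agree N (iter n (@shift s A) x) (iter n (@shift s A) y).

Definition fwd_LiYorke (s : sided) (A : finType) (x y : pt s A) : Prop :=
  fwd_proximal x y /\ ~ fwd_asymptotic x y.

(* f (viewed as a self-map of X, only its values on X matter) lies in the
   closure of {sigma^n : n >= 0} in X^X for the topology of pointwise
   convergence: every basic neighbourhood of f (finitely many points of X,
   a window radius N) contains some sigma^n. *)
Definition in_Ellis (s : sided) (A : finType) (X : pt s A -> Prop)
    (f : pt s A -> pt s A) : Prop :=
  forall (F : list (pt s A)), (forall x, List.In x F -> X x) ->
  forall N : nat, exists n : nat,
    forall x, List.In x F -> agree N (f x) (iter n (@shift s A) x).

(* f restricted to its image f(X) is not injective *)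
Definition not_injective_on_image (s : sided) (A : finType) (X : pt s A -> Prop)
    (f : pt s A -> pt s A) : Prop :=
  exists a b : pt s A, X a /\ X b /\ f a <> f b /\ f (f a) = f (f b).

Definition completely_regular (s : sided) (A : finType) (X : pt s A -> Prop)
    (f : pt s A -> pt s A) : Prop :=
  exists g : pt s A -> pt s A,
    (forall x, X x -> X (g x)) /\
    (forall x, X x -> f x = f (g (f x))) /\
    (forall x, X x -> f (g x) = g (f x)).

From mathcomp Require Import all_boot all_order all_algebra.
From mathcomp Require Import boolp classical_sets filter.
From mathcomp Require Import zify.
From Stdlib Require List.
Set Implicit Arguments. Unset Strict Implicit. Unset Printing Implicit Defensive.
Import Order.TTheory GRing.Theory Num.Theory.
Local Open Scope classical_set_scope.

(* Proximality gives arbitrarily long runs of agreement of x and y, and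
   non-asymptoticity gives disagreements arbitrarily far out; together they
   give times q L >= L at which x and y disagree, followed by L coordinates of
   agreement. For an ultrafilter G refining the Frechet filter, the pointwise
   G-limit f of the shifts sigma^(q L) lies in the Ellis semigroup, and f x,
   f y differ at coordinate 0 but agree at every positive coordinate. So they
   are forward asymptotic, and f (f x) = f (f y) because f only reads
   coordinates arbitrarily far to the right. If f = f g f with f g = g f, then
   f x = g (f (f x)) = g (f (f y)) = f y, a contradiction. *)

Definition nat_idx (s : sided) : nat -> idx s :=
  match s return nat -> idx s with
  | OneSided => fun j => j
  | TwoSided => fun j => Posz j end.

Definition addn_idx (s : sided) : idx s -> nat -> idx s :=
  match s return idx s -> nat -> idx s with
  | OneSided => fun (k : nat) n => (k + n)%N
  | TwoSided => fun (k : int) n => (k + Posz n)%R end.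

Definition int_of_idx (s : sided) : idx s -> int :=
  match s return idx s -> int with
  | OneSided => fun k : nat => Posz k
  | TwoSided => fun k : int => k end.

Lemma int_of_idx_inj s : injective (@int_of_idx s).
Proof. by case: s => k k' /=; lia. Qed.

Lemma int_of_nat_idx s j : int_of_idx (nat_idx s j) = Posz j.
Proof. by case: s. Qed.

Lemma int_of_addn_idx s (k : idx s) n :
  int_of_idx (addn_idx k n) = (int_of_idx k + Posz n)%R.
Proof. by case: s k => k /=; lia. Qed.

Lemma nat_idxK s (k : idx s) :
  (0 <= int_of_idx k)%R -> nat_idx s (absz (int_of_idx k)) = k.
Proof. by move=> k_ge0; apply: int_of_idx_inj; rewrite int_of_nat_idx; lia. Qed.

Lemma addn_nat_idx s i n : addn_idx (nat_idx s i) n = nat_idx s (i + n).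
Proof. by apply: int_of_idx_inj; rewrite int_of_addn_idx !int_of_nat_idx; lia. Qed.

Lemma iter_shift s (A : finType) n (z : pt s A) k :
  iter n (@shift s A) z k = z (addn_idx k n).
Proof.
elim: n k => [|n IH] k /=; first by congr z; case: s {z} k => k /=; lia.
by rewrite /shift IH; congr z; case: s {z IH} k => k /=; lia.
Qed.

Lemma in_win_ge s N (k : idx s) : in_win N k -> (- Posz N <= int_of_idx k)%R.
Proof. by case: s k => k /=; lia. Qed.

Lemma in_win_nat_idx s N j : (j <= N)%N -> in_win N (nat_idx s j).
Proof. by case: s => /=; lia. Qed.

Lemma in_win_finite s N :
  exists l : list (idx s), forall k, in_win N k -> List.In k l.
Proof.
case: s => /=.
  by exists (List.seq 0 N.+1) => k k_le; apply/List.in_seq; lia.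
exists (List.map (fun i => (Posz i - Posz N)%R) (List.seq 0 N.*2.+1)) => k k_le.
apply/List.in_map_iff; exists (absz (k + Posz N)%R); split; first by lia.
by apply/List.in_seq; lia.
Qed.

Lemma exists_point_before_gap (D : pred nat) :
  (forall L, exists2 j, (L <= j)%N & D j) ->
  (forall L, exists n, forall i, (i <= L)%N -> ~~ D (n + i)) ->
  forall L, exists p, [/\ (L <= p)%N, D p & forall j, (p < j <= p + L)%N -> ~~ D j].
Proof.
move=> D_unbounded D_gaps L.
have [d L_le_d Dd] := D_unbounded L.
have [n gap] := D_gaps (d + L)%N.
have d_lt_n : (d < n)%N.
  rewrite ltnNge; apply/negP => n_le_d.
  have /negP[] := gap (d - n)%N ltac:(lia).
  by rewrite subnKC.
(* p is the last point of D before the gap [n, n + d + L]. *)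
have D_below_n : exists j, D j && (j < n)%N by exists d; rewrite Dd d_lt_n.
have below_n_bounded j : D j && (j < n)%N -> (j <= n)%N by case/andP=> _ /ltnW.
have [p /andP[Dp p_lt_n] p_max] := ex_maxnP D_below_n below_n_bounded.
exists p; split=> //; first by apply: leq_trans L_le_d (p_max d _); rewrite Dd.
move=> j /andP[p_lt_j j_le]; have [j_lt_n|n_le_j] := ltnP j n.
  by apply/negP => Dj; move: p_lt_j; rewrite ltnNge p_max ?Dj.
by have := gap (j - n)%N; rewrite subnKC //; apply; lia.
Qed.

Section Discrepancy.
Variables (s : sided) (A : finType) (x y : pt s A).

Definition discrepancy : pred nat := fun j => x (nat_idx s j) != y (nat_idx s j).

Lemma discrepancy_unbounded :
  ~ fwd_asymptotic x y -> forall L, exists2 j, (L <= j)%N & discrepancy j.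
Proof.
move=> not_asy L; apply: contrapT => no_late_disc; apply: not_asy => N.
exists (L + N)%N => n n_ge k k_win; rewrite !iter_shift.
have k_ge := in_win_ge k_win; have kn := int_of_addn_idx k n.
rewrite -(@nat_idxK _ (addn_idx k n)); last by lia.
apply/eqP/negPn/negP => disc; apply: no_late_disc.
by exists (absz (int_of_idx (addn_idx k n))) => //; lia.
Qed.

Lemma discrepancy_gaps :
  fwd_proximal x y -> forall L, exists n, forall i, (i <= L)%N -> ~~ discrepancy (n + i).
Proof.
move=> prox L; have [n agree_n] := prox L; exists n => i i_le.
have := agree_n _ (in_win_nat_idx s i_le); rewrite !iter_shift.
by rewrite addn_nat_idx addnC /discrepancy negbK => ->.
Qed.

End Discrepancy.

Lemma filter_forall_list (T I : Type) (F : set_system T) {FF : Filter F}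
    (l : list I) (P : I -> set T) :
  (forall i, List.In i l -> F (P i)) -> F (fun t => forall i, List.In i l -> P i t).
Proof.
elim: l => [|i l IH] F_P; first exact: filterE.
have F_P_l := IH (fun j l_j => F_P j (or_intror l_j)).
apply: (filterS2 _ _ (F_P i (or_introl erefl)) F_P_l).
by move=> t Pit Plt j [<-|l_j] //; exact: Plt.
Qed.

Section UltraLimit.
Variables (G : set_system nat) (A : finType).
Hypothesis G_ultra : UltraFilter G.

Lemma ultra_eventually_const (u : nat -> A) : exists a, G [set L | u L = a].
Proof.
suff /(_ (enum A)) : forall l : seq A,
    G [set L | u L \in l] -> exists a, G [set L | u L = a].
  by apply; apply: filterE => L; rewrite /= mem_enum.
elim=> [|a l IH] G_l; first by have [L] := filter_ex G_l.
have [G_a|G_not_a] := in_ultra_setVsetC [set L | u L = a] G_ultra; first by exists a.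
apply: IH; apply: (filterS2 _ _ G_l G_not_a) => L.
by rewrite /= in_cons => /orP[/eqP|].
Qed.

Definition ulim (u : nat -> A) : A := proj1_sig (cid (ultra_eventually_const u)).

Lemma ulimP u : G [set L | u L = ulim u].
Proof. exact: proj2_sig (cid (ultra_eventually_const u)). Qed.

Lemma eq_ulim u v : G [set L | u L = v L] -> ulim u = ulim v.
Proof.
move=> G_uv.
have [L [uvL [uL vL]]] := filter_ex (filterI G_uv (filterI (ulimP u) (ulimP v))).
by rewrite -uL -vL.
Qed.

Variable s : sided.

Definition ulim_shift (q : nat -> nat) (z : pt s A) : pt s A :=
  fun k => ulim (fun L => iter (q L) (@shift s A) z k).

Lemma ulim_shiftP q z k : G [set L | iter (q L) (@shift s A) z k = ulim_shift q z k].
Proof. exact: ulimP. Qed.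

Lemma ulim_shift_in_Ellis X q : in_Ellis X (ulim_shift q).
Proof.
move=> F _ N; have [l l_win] := in_win_finite s N.
have G_F_l : G (fun L => forall z, List.In z F -> forall k, List.In k l ->
    iter (q L) (@shift s A) z k = ulim_shift q z k).
  apply: filter_forall_list => z _; apply: filter_forall_list => k _.
  exact: ulim_shiftP.
have [L agree_L] := filter_ex G_F_l.
by exists (q L) => z F_z k k_win; symmetry; exact: agree_L _ F_z _ (l_win _ k_win).
Qed.

Hypothesis G_tail : eventually `<=` G.

Lemma ulim_tail K : G [set L | (K <= L)%N].
Proof. by apply: G_tail; exists K. Qed.

Lemma ulim_shift_eq_of_eq_pos q (u v : pt s A) : (forall L, (L <= q L)%N) ->
  (forall k, (0 < int_of_idx k)%R -> u k = v k) -> ulim_shift q u = ulim_shift q v.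
Proof.
move=> q_ge uv; apply: funext => k; apply: eq_ulim.
apply: filterS (ulim_tail (absz (int_of_idx k)).+1) => L /= L_gt.
by rewrite !iter_shift; apply: uv; rewrite int_of_addn_idx; have := q_ge L; lia.
Qed.

Section IsolatedDiscrepancy.
Variables (x y : pt s A) (q : nat -> nat).
Hypothesis disc_q : forall L, discrepancy x y (q L).
Hypothesis gap_q : forall L j, (q L < j <= q L + L)%N -> ~~ discrepancy x y j.

Lemma ulim_shift_neq : ulim_shift q x <> ulim_shift q y.
Proof.
move=> fxy; have [L [xL yL]] := filter_ex
  (filterI (ulim_shiftP q x (nat_idx s 0)) (ulim_shiftP q y (nat_idx s 0))).
move: (disc_q L); rewrite /discrepancy.
by rewrite /= !iter_shift addn_nat_idx add0n in xL yL; rewrite xL yL fxy eqxx.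
Qed.

Lemma ulim_shift_eq_at_pos k :
  (0 < int_of_idx k)%R -> ulim_shift q x k = ulim_shift q y k.
Proof.
move=> k_gt0; apply: eq_ulim.
apply: filterS (ulim_tail (absz (int_of_idx k))) => L /= L_ge.
rewrite !iter_shift -[k](@nat_idxK s); last by lia.
by rewrite addn_nat_idx addnC; apply/eqP/negPn; apply: (@gap_q L); lia.
Qed.

End IsolatedDiscrepancy.
End UltraLimit.

Lemma in_Ellis_maps_into s A (X : pt s A -> Prop) f :
  subshift X -> in_Ellis X f -> forall z, X z -> X (f z).
Proof.
move=> [X_closed X_shift] f_Ellis z Xz; apply: X_closed => N.
have [n agree_n] := f_Ellis [:: z] ltac:(by move=> w [<-|[]]) N.
exists (iter n (@shift s A) z); split; last exact: agree_n _ (or_introl erefl).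
by elim: n {agree_n} => //= n; exact: X_shift.
Qed.

Lemma fwd_asymptotic_of_eq_pos s A (u v : pt s A) :
  (forall k, (0 < int_of_idx k)%R -> u k = v k) -> fwd_asymptotic u v.
Proof.
move=> uv N; exists N.+1 => n n_gt k k_win; rewrite !iter_shift; apply: uv.
by rewrite int_of_addn_idx; have := in_win_ge k_win; lia.
Qed.

Lemma not_completely_regular s A (X : pt s A -> Prop) f :
  (forall z, X z -> X (f z)) -> not_injective_on_image X f -> ~ completely_regular X f.
Proof.
move=> f_X [a [b [Xa [Xb [fab ffab]]]]] [g [_ [fgf fg]]]; apply: fab.
by rewrite (fgf a Xa) (fg _ (f_X _ Xa)) ffab -(fg _ (f_X _ Xb)) -(fgf b Xb).
Qed.

Theorem lemma4p10 (s : sided) (A : finType) (X : pt s A -> Prop)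
  (x y : pt s A) :
  subshift X -> X x -> X y -> fwd_LiYorke x y ->
  exists f : pt s A -> pt s A,
    in_Ellis X f /\ f x <> f y /\ fwd_asymptotic (f x) (f y) /\
    not_injective_on_image X f /\ ~ completely_regular X f.
Proof.
move=> X_sub Xx Xy [prox not_asy].
have [q q_spec] := choice (exists_point_before_gap
  (discrepancy_unbounded not_asy) (discrepancy_gaps prox)).
have q_ge L : (L <= q L)%N by case: (q_spec L).
have disc_q L : discrepancy x y (q L) by case: (q_spec L).
have gap_q L : forall j, (q L < j <= q L + L)%N -> ~~ discrepancy x y j.
  by case: (q_spec L).
have [G [G_ultra G_tail]] := ultraFilterLemma eventually_filter.
pose f : pt s A -> pt s A := ulim_shift G_ultra q.
have f_Ellis : in_Ellis X f := ulim_shift_in_Ellis G_ultra q.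
have fx_pos := ulim_shift_eq_at_pos G_ultra G_tail gap_q.
have ffxy : f (f x) = f (f y) := ulim_shift_eq_of_eq_pos G_ultra G_tail q_ge fx_pos.
have f_X := in_Ellis_maps_into X_sub f_Ellis.
have fxy : f x <> f y := ulim_shift_neq disc_q.
have f_noninj : not_injective_on_image X f by exists x, y.
exists f; do !split=> //; last exact: not_completely_regular f_X f_noninj.
exact: fwd_asymptotic_of_eq_pos fx_pos.
Qed.
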